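(* Let $D$ be an integral domain with fraction field $K$, and let $R(D)$ be the subring of $K$ generated by $\{1/d \mid d \in D\setminus\{0\}\}$. Then $D$ is Bonaccian if and only if $R(D)$ is a valuation ring (of $K$). Moreover, the following are equivalent: (i) $D$ is Egyptian; (ii) $R(D) = K$; (iii) $D \subseteq R(D)$.
   Context: An element $\alpha\in K$ is called $D$-Egyptian if it is a sum of reciprocals of distinct nonzero elements of $D$. $D$ is Bonaccian if for every nonzero $\alpha \in K$, either $\alpha$ or $\alpha^{-1}$ is $D$-Egyptian. $D$ is Egyptian if every nonzero element of $K$ is $D$-Egyptian. *)

From HB Require Import structures.
From mathcomp Require Import all_boot all_order all_algebra.
Set Implicit Arguments. Unset Strict Implicit. Unset Printing Implicit Defensive.
Import GRing.Theory.
Local Open Scope ring_scope.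

Definition D_Egyptian (D : idomainType) (alpha : {fraction D}) : Prop :=
  exists s : seq D, [/\ uniq s, all (fun d => d != 0) s &
    alpha = \sum_(d <- s) (tofrac d)^-1].

Definition Bonaccian (D : idomainType) : Prop :=
  forall alpha : {fraction D}, alpha != 0 ->
    D_Egyptian alpha \/ D_Egyptian alpha^-1.

Definition Egyptian (D : idomainType) : Prop :=
  forall alpha : {fraction D}, alpha != 0 -> D_Egyptian alpha.

Definition in_RD (D : idomainType) (x : {fraction D}) : Prop :=
  forall S : {pred {fraction D}}, subring_closed S ->
    (forall d : D, d != 0 -> (tofrac d)^-1 \in S) -> x \in S.

Definition valuation_ring_of (K : fieldType) (V : K -> Prop) : Prop :=
  [/\ V 1, (forall x y, V x -> V y -> V (x - y)),
      (forall x y, V x -> V y -> V (x * y)) &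
      forall x : K, x != 0 -> V x \/ V x^-1].

(* Reciprocals of distinct elements can absorb any further reciprocal 1/d:
   if d is new, append it; if not, then in characteristic 0 expand
   1/d = sum 1/(n d) along an Egyptian expansion 1 = sum 1/n whose denominators
   are all large (a block of the harmonic series completed by the
   Fibonacci-Sylvester greedy algorithm), and in characteristic p merge
   1/d + 1/d into 0 (p = 2) or into 1/(d/2) (p odd).  Hence the D-Egyptian
   elements are exactly the finite sums of reciprocals of nonzero elements,
   and these form the subring R(D), since -1/d = 1/(-d) and
   (1/d)(1/e) = 1/(de).  All three statements follow, the last one because
   every element of K is a quotient a (1/b). *)

From HB Require Import structures.
From mathcomp Require Import all_boot all_order all_algebra.
From mathcomp Require Import ring lra zify boolp.
Set Implicit Arguments. Unset Strict Implicit. Unset Printing Implicit Defensive.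
Import Order.TTheory GRing.Theory Num.Theory.
Local Open Scope ring_scope.

Lemma harmonic_dyadic_ge_half (R : realFieldType) (m : nat) : (0 < m)%N ->
  2^-1 <= \sum_(m <= k < m.*2) (k%:R : R)^-1.
Proof.
move=> m_gt0; apply: (@le_trans _ _ (\sum_(m <= k < m.*2) (m.*2%:R : R)^-1)).
  rewrite sumr_const_nat.
  have -> : (m.*2 - m = m)%N by lia.
  have m_neq0 : (m%:R : R) != 0 by rewrite pnatr_eq0 -lt0n.
  by rewrite -(mulr_natr _ m) -muln2 natrM invfM mulrAC mulVf ?mul1r.
apply: ler_sum_nat => k /andP[m_le_k k_lt_2m].
by rewrite lef_pV2 ?posrE ?ltr0n ?ler_nat; lia.
Qed.

Lemma harmonic_block_gt1 (R : realFieldType) (L : nat) : (0 < L)%N ->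
  1 < \sum_(L <= k < 8 * L) (k%:R : R)^-1.
Proof.
move=> L_gt0; have -> : (8 * L = L.*2.*2.*2)%N by lia.
rewrite (@big_cat_nat _ _ _ L.*2) /=; [|lia|lia].
rewrite (@big_cat_nat _ _ _ L.*2.*2 L.*2) /=; [|lia|lia].
have := harmonic_dyadic_ge_half R L_gt0.
have := @harmonic_dyadic_ge_half R L.*2 ltac:(lia).
have := @harmonic_dyadic_ge_half R L.*2.*2 ltac:(lia).
lra.
Qed.

Lemma greedy_egyptian (R : numFieldType) (a b L : nat) : (0 < L)%N -> (a * L < b)%N ->
  exists t : seq nat, [/\ uniq t, all (leq L.+1) t &
    (a%:R / b%:R : R) = \sum_(n <- t) (n%:R)^-1].
Proof.
elim/ltn_ind: a b L => a IH b L L_gt0 aL_lt_b.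
have [->|a_gt0] := posnP a; first by exists [::]; rewrite big_nil mul0r.
(* [n] is the ceiling of b/a, and a/b - 1/n = (a n - b)/(b n) with a n - b < a. *)
pose n := ((b + a.-1) %/ a)%N.
have [b_le_an an_lt_ba] : (b <= a * n)%N /\ (a * n < b + a)%N.
  have := divn_eq (b + a.-1) a; have := ltn_pmod (b + a.-1) a_gt0.
  rewrite -/n; nia.
have L_lt_n : (L < n)%N by nia.
have [|||t [uniq_t t_gt_n sum_t]] := IH (a * n - b)%N _ (b * n)%N n; try nia.
exists (n :: t); split => /=.
- rewrite uniq_t andbT; apply: contraT => /negbNE /(allP t_gt_n); lia.
- rewrite L_lt_n; apply/allP => m /(allP t_gt_n) /=; lia.
rewrite big_cons -sum_t natrB // !natrM.
have b_neq0 : (b%:R : R) != 0 by rewrite pnatr_eq0; lia.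
have n_neq0 : (n%:R : R) != 0 by rewrite pnatr_eq0; lia.
by field; rewrite b_neq0 n_neq0.
Qed.

Lemma egyptian_one_rat (M : nat) : exists t : seq nat,
  [/\ uniq t, all (leq M.+1) t & \sum_(n <- t) (n%:R : rat)^-1 = 1].
Proof.
pose h N := \sum_(M.+1 <= k < N) (k%:R : rat)^-1.
have h_gt1 : exists N, 1 < h N by exists (8 * M.+1)%N; apply: harmonic_block_gt1.
(* The least N with 1 < h N.+1 leaves a remainder 1 - h N below 1/N, which the
   greedy algorithm expands with denominators beyond N. *)
case: (ex_minnP h_gt1) => -[|N] h_N1_gt1 N1_min.
  by rewrite /h big_geq ?ltr10 in h_N1_gt1.
have M_lt_N : (M < N)%N.
  by rewrite ltnNge; apply: contraTN h_N1_gt1 => N_le_M; rewrite /h big_geq ?ltr10.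
have h_N_le1 : h N <= 1 by rewrite leNgt; apply/negP => /N1_min; rewrite ltnn.
pose r := 1 - h N.
have r_ge0 : 0 <= r by rewrite subr_ge0.
have r_lt : r < N%:R^-1 by move: h_N1_gt1; rewrite /h big_nat_recr //= -/(h N) /r; lra.
have [a [b [b_gt0 def_r]]] : exists a b : nat, (0 < b)%N /\ r = a%:R / b%:R.
  have num_r : numq r = `|numq r|%N by rewrite gez0_abs ?numq_ge0.
  have den_r : denq r = `|denq r|%N by rewrite gtz0_abs ?denq_gt0.
  exists `|numq r|%N, `|denq r|%N; split; first by rewrite -ltz_nat -den_r denq_gt0.
  by rewrite -[LHS]divq_num_den {1}num_r den_r.
have aN_lt_b : (a * N < b)%N.
  move: r_lt; rewrite def_r ltr_pdivrMr ?ltr0n // mulrC ltr_pdivlMr ?ltr0n; last lia.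
  by rewrite -natrM ltr_nat.
have [t [uniq_t t_gt_N sum_t]] := @greedy_egyptian rat a b N ltac:(lia) aN_lt_b.
exists (iota M.+1 (N - M.+1) ++ t); split.
- rewrite cat_uniq iota_uniq uniq_t andbT /=.
  by apply/hasPn => n /(allP t_gt_N) /=; rewrite mem_iota; lia.
- rewrite all_cat; apply/andP; split; apply/allP => n.
    by rewrite mem_iota; lia.
  by move/(allP t_gt_N) => /=; lia.
by rewrite big_cat /= -sum_t -def_r /r addrC subrK.
Qed.

Lemma prodn_seq_gt0 (t : seq nat) : 0%N \notin t -> (0 < \prod_(m <- t) m)%N.
Proof.
move=> t_neq0; rewrite big_seq prodn_cond_gt0 // => n.
by rewrite lt0n; apply: contraTneq => ->.
Qed.

Lemma sum_inv_natE (F : fieldType) (t : seq nat) : [pchar F] =i pred0 -> 0%N \notin t ->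
  \sum_(n <- t) (n%:R : F)^-1 =
    (\sum_(n <- t) (\prod_(m <- t) m) %/ n)%:R / (\prod_(m <- t) m)%:R.
Proof.
move=> F0 t_neq0; have /pcharf0P natF_eq0 := F0.
have P_neq0 : ((\prod_(m <- t) m)%:R : F) != 0 by rewrite natF_eq0 -lt0n prodn_seq_gt0.
rewrite natr_sum mulr_suml; apply: eq_big_seq => n t_n.
have n_dvd_P : (n %| \prod_(m <- t) m)%N by rewrite (big_rem n t_n) dvdn_mulr.
by rewrite pchar0_natf_div // mulrAC divff // mul1r.
Qed.

Lemma egyptian_one (F : fieldType) (M : nat) : [pchar F] =i pred0 ->
  exists t : seq nat, [/\ uniq t, all (leq M.+1) t & \sum_(n <- t) (n%:R : F)^-1 = 1].
Proof.
move=> F0; have [t [uniq_t t_gt_M sum_t]] := egyptian_one_rat M.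
exists t; split => //.
have t_neq0 : 0%N \notin t by apply: contraTN t_gt_M => t0; apply/allPn; exists 0%N.
(* Clearing denominators turns the identity over rat into one between naturals. *)
move: sum_t; rewrite (sum_inv_natE (pchar_num _)) // (sum_inv_natE F0) //.
set P := (\prod_(m <- t) m)%N.
have P_neq0 (R : fieldType) : [pchar R] =i pred0 -> (P%:R : R) != 0.
  by move/pcharf0P => ->; rewrite -lt0n prodn_seq_gt0.
move/(canRL (divfK (P_neq0 _ (pchar_num _)))); rewrite mul1r => /eqP.
by rewrite eqr_nat => /eqP->; rewrite divff // P_neq0.
Qed.

Lemma injective_eventually_notin (T : eqType) (f : nat -> T) (s : seq T) :
  injective f -> exists M, forall n, (M < n)%N -> f n \notin s.
Proof.
move=> f_inj; elim: s => [|e s [M f_notin_s]]; first by exists 0%N.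
have [[m fm_e]|no_preim] := pselect (exists m, f m = e).
  exists (maxn M m) => n; rewrite gtn_max => /andP[M_lt_n m_lt_n].
  rewrite inE negb_or f_notin_s // andbT -fm_e.
  by apply: contraTneq m_lt_n => /f_inj->; rewrite ltnn.
exists M => n M_lt_n; rewrite inE negb_or f_notin_s // andbT.
by apply/eqP => fn_e; apply: no_preim; exists n.
Qed.

Lemma pchar_two_eq0_or_unit (R : comUnitRingType) (p : nat) : p \in [pchar R] ->
  (2%:R == 0 :> R) || ((2%:R : R) \is a GRing.unit).
Proof.
move=> pcharRp; have [p2 | odd_p] := even_prime (pcharf_prime pcharRp).
  by rewrite -p2 (pcharf0 pcharRp) eqxx.
apply/orP; right; apply/unitrPr; exists (p.+1./2)%:R.
by rewrite -natrM mul2n halfK /= odd_p subn0 -addn1 natrD (pcharf0 pcharRp) add0r.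
Qed.

Lemma pchar0_natr_inj (R : idomainType) : [pchar R] =i pred0 ->
  injective (fun n : nat => n%:R : R).
Proof.
move=> /pcharf0P natR_eq0 m n; wlog le_mn : m n / (m <= n)%N => [wlog_le eq_mn|].
  by case/orP: (leq_total m n) => /wlog_le; [apply | move/(_ (esym eq_mn))/esym].
move/eqP; rewrite eq_sym -subr_eq0 -natrB // natR_eq0 subn_eq0 => le_nm.
by apply/eqP; rewrite eqn_leq le_mn.
Qed.

Lemma fraction_numden (D : idomainType) (x : {fraction D}) :
  exists a b : D, b != 0 /\ x = tofrac a / tofrac b.
Proof.
elim/quotW: x => r; exists r.1, r.2; split; first exact: denom_ratioP.
apply: (canRL (mulfK _)); first by rewrite tofrac_eq0 denom_ratioP.
unlock tofrac; apply: etrans (esym (pi_mul _ _)) _; apply/eqmodP.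
rewrite /= equivfE /mulf /= !numden_Ratio ?mulf_neq0 ?oner_eq0 ?denom_ratioP //.
by rewrite !mulr1 mulrC.
Qed.

Section RecipSums.

Variable D : idomainType.
Local Notation K := {fraction D}.

Lemma in_RD1 : in_RD (1 : K).
Proof. by move=> S []. Qed.

Lemma in_RDB (x y : K) : in_RD x -> in_RD y -> in_RD (x - y).
Proof.
move=> RDx RDy S S_ring S_recip; have [_ SB _] := S_ring.
exact: SB (RDx S S_ring S_recip) (RDy S S_ring S_recip).
Qed.

Lemma in_RDM (x y : K) : in_RD x -> in_RD y -> in_RD (x * y).
Proof.
move=> RDx RDy S S_ring S_recip; have [_ _ SM] := S_ring.
exact: SM (RDx S S_ring S_recip) (RDy S S_ring S_recip).
Qed.

Lemma in_RD_recip (d : D) : d != 0 -> in_RD (tofrac d)^-1.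
Proof. by move=> nz_d S _ S_recip; apply: S_recip. Qed.

Definition sum_recip (s : seq D) : K := \sum_(d <- s) (tofrac d)^-1.

Definition recip_sum (x : K) : Prop :=
  exists2 s : seq D, all (fun d => d != 0) s & x = sum_recip s.

Lemma sum_recip_cat (s r : seq D) : sum_recip (s ++ r) = sum_recip s + sum_recip r.
Proof. exact: big_cat. Qed.

Lemma recip_sum1 : recip_sum 1.
Proof. by exists [:: 1]; rewrite /= ?oner_eq0 // /sum_recip big_seq1 tofrac1 invr1. Qed.

Lemma recip_sumB (x y : K) : recip_sum x -> recip_sum y -> recip_sum (x - y).
Proof.
move=> [s nz_s ->] [r nz_r ->]; exists (s ++ map -%R r).
  by rewrite all_cat nz_s all_map; apply/allP => d /(allP nz_r) /=; rewrite oppr_eq0.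
rewrite sum_recip_cat /sum_recip big_map -sumrN.
by congr (_ + _); apply: eq_bigr => d _; rewrite tofracN invrN.
Qed.

Lemma recip_sumM (x y : K) : recip_sum x -> recip_sum y -> recip_sum (x * y).
Proof.
move=> [s nz_s ->] [r nz_r ->]; exists [seq d * e | d <- s, e <- r].
  apply/allP => z /allpairsP[[d e] [s_d r_e ->]].
  by rewrite mulf_neq0 ?(allP nz_s _ s_d) ?(allP nz_r _ r_e).
rewrite /sum_recip big_allpairs_dep mulr_suml; apply: eq_bigr => d _.
by rewrite mulr_sumr; apply: eq_bigr => e _; rewrite tofracM invfM.
Qed.

Lemma in_RD_recip_sum (x : K) : in_RD x -> recip_sum x.
Proof.
(* [in_RD] quantifies over boolean predicates only, hence the classical
   reflection of [recip_sum]. *)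
move=> RDx; suff /asboolP : x \in [pred y | `[< recip_sum y >]] by [].
apply: RDx => [|d nz_d].
  split=> [|y z|y z]; rewrite !inE; first exact/asboolP/recip_sum1.
    by move=> /asboolP RSy /asboolP RSz; apply/asboolP/recip_sumB.
  by move=> /asboolP RSy /asboolP RSz; apply/asboolP/recip_sumM.
by apply/asboolP; exists [:: d]; rewrite /= ?nz_d // /sum_recip big_seq1.
Qed.

Lemma recip_sum_in_RD (x : K) : recip_sum x -> in_RD x.
Proof.
move=> [s nz_s ->] S /GRing.subring_closedB/GRing.zmod_closedD[S0 SD] S_recip.
rewrite /sum_recip big_seq; apply: (big_ind (fun y => y \in S)) => // d s_d.
exact/S_recip/(allP nz_s).
Qed.

Lemma egyptianD_recip_pchar (x : K) (d : D) :
    (2%:R == 0 :> D) || ((2%:R : D) \is a GRing.unit) ->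
  D_Egyptian x -> d != 0 -> D_Egyptian (x + (tofrac d)^-1).
Proof.
move=> two [s [uniq_s nz_s ->]]; have [n] := ubnP (size s).
elim: n s d uniq_s nz_s => // n IH s d uniq_s nz_s size_s nz_d.
have [s_d | s_d] := boolP (d \in s); last first.
  by exists (d :: s); rewrite /= s_d uniq_s nz_d nz_s big_cons addrC.
have -> : sum_recip s + (tofrac d)^-1 =
    sum_recip (rem d s) + (tofrac d)^-1 *+ 2.
  by rewrite /sum_recip (big_rem _ s_d) /= mulr2n addrA [(tofrac d)^-1 + _]addrC.
have uniq_r : uniq (rem d s) by apply: rem_uniq.
have nz_r : all (fun e => e != 0) (rem d s).
  by apply/allP => e /mem_rem /(allP nz_s).
case/orP: two => [/eqP two0 | two_unit].
  rewrite -mulr_natr -(rmorph_nat (@tofrac D)) two0 rmorph0 mulr0 addr0.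
  by exists (rem d s).
have -> : (tofrac d)^-1 *+ 2 = (tofrac (d / 2%:R))^-1.
  by rewrite tofracM (rmorphV _ two_unit) invfM invrK rmorph_nat mulr_natr.
apply: IH => //; last first.
  by rewrite mulf_neq0 ?invr_eq0 //; apply: contraTneq two_unit => ->; rewrite unitr0.
have s_gt0 : (0 < size s)%N by case: (s) s_d.
by rewrite size_rem // -ltnS prednK.
Qed.

Lemma egyptianD_recip_char0 (x : K) (d : D) : [pchar D] =i pred0 ->
  D_Egyptian x -> d != 0 -> D_Egyptian (x + (tofrac d)^-1).
Proof.
move=> D0 [s [uniq_s nz_s ->]] nz_d; have /pcharf0P natD_eq0 := D0.
have mul_d_inj : injective (fun n : nat => n%:R * d).
  by move=> m n /(mulIf nz_d) /(pchar0_natr_inj D0).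
have [M notin_s] := injective_eventually_notin s mul_d_inj.
have K0 : [pchar K] =i pred0.
  by apply/pcharf0P => n; rewrite -(rmorph_nat (@tofrac D)) tofrac_eq0 natD_eq0.
have [t [uniq_t t_gt_M sum_t]] := egyptian_one M K0.
exists (s ++ map (fun n => n%:R * d) t); split.
- rewrite cat_uniq uniq_s map_inj_uniq // uniq_t andbT /=.
  by apply/hasPn => _ /mapP[n t_n ->]; apply/notin_s/(allP t_gt_M).
- rewrite all_cat nz_s; apply/allP => _ /mapP[n t_n ->].
  by rewrite mulf_neq0 // natD_eq0 -lt0n (leq_trans _ (allP t_gt_M _ t_n)).
rewrite big_cat big_map -[(tofrac d)^-1]mul1r -sum_t mulr_suml; congr (_ + _).
by apply: eq_bigr => n _; rewrite tofracM invfM rmorph_nat.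
Qed.

Lemma egyptianD_recip (x : K) (d : D) :
  D_Egyptian x -> d != 0 -> D_Egyptian (x + (tofrac d)^-1).
Proof.
have [[p pcharDp] | no_pchar] := pselect (exists p, p \in [pchar D]).
  exact/egyptianD_recip_pchar/(pchar_two_eq0_or_unit pcharDp).
apply: egyptianD_recip_char0 => p; rewrite inE.
by apply/negP => pcharDp; apply: no_pchar; exists p.
Qed.

Lemma recip_sum_egyptian (x : K) : recip_sum x -> D_Egyptian x.
Proof.
move=> [s]; elim: s x => [|d s IH] x /=; first by move=> _ ->; exists [::].
case/andP=> nz_d nz_s ->; rewrite /sum_recip big_cons addrC.
exact/egyptianD_recip/nz_d/IH.
Qed.

Lemma in_RD_egyptian (x : K) : in_RD x <-> D_Egyptian x.
Proof.
split=> [/in_RD_recip_sum/recip_sum_egyptian //|[s [_ nz_s ->]]].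
by apply: recip_sum_in_RD; exists s.
Qed.

End RecipSums.

Theorem proposition2p4 (D : idomainType) :
  (Bonaccian D <-> valuation_ring_of (@in_RD D)) /\
  (Egyptian D <-> (forall x : {fraction D}, in_RD x)) /\
  ((forall x : {fraction D}, in_RD x) <-> (forall d : D, in_RD (tofrac d))).
Proof.
split; [split | split; split].
- move=> bonaccian; split; [exact: in_RD1 | exact: in_RDB | exact: in_RDM |].
  by move=> x /bonaccian[] /in_RD_egyptian RDx; [left | right].
- by move=> [_ _ _ valuation] x /valuation[] /in_RD_egyptian egx; [left | right].
- move=> egyptian x; apply/in_RD_egyptian.
  by have [->|/egyptian //] := eqVneq x 0; exists [::]; rewrite big_nil.
- by move=> all_RD x _; apply/in_RD_egyptian.
- by move=> all_RD d.
- move=> RD_tofrac x; have [a [b [nz_b ->]]] := fraction_numden x.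
  exact/in_RDM/in_RD_recip.
Qed.
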